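(* Let $n\ge3$. For $k=0$ and every $0$-jet $j^0\Gamma\in\mathcal{F}_0$, the stabilizer subalgebra of $j^0\Gamma$ in $\mathfrak{k}_0$ projects isomorphically onto the space of linear vector fields $V_1$ (i.e. $V_1$ is arbitrary and $V_2$ is uniquely determined by $V_1$), so it has dimension $n^2$. For every $k\ge1$, there is an open dense subset of $\mathcal{F}_k$ such that for every $j^k\Gamma$ in it the stabilizer subalgebra of $j^k\Gamma$ in $\mathfrak{k}_k$ is $\{0\}$.
   Context: A symmetric connection near $0\in\mathbb{R}^n$ is given by smooth Christoffel symbols $\Gamma^l_{ij}=\Gamma^l_{ji}$. $\mathcal{F}_k$ denotes the (finite-dimensional) vector space of $k$-jets at $0$ of such connections, i.e. of degree-$\le k$ Taylor polynomials of the $\Gamma^l_{ij}$ at $0$. The group $G=\mathrm{Diff}(\mathbb{R}^n,0)$ of germs of origin-preserving diffeomorphisms acts on connections by $(\varphi^*\nabla)_XY=(\varphi_* )^{-1}(\nabla_{\varphi_*X}\varphi_*Y)$, hence on $\mathcal{F}_k$; this action factors through the finite-dimensional Lie group $K_k=G/G_{k+3}$, where $G_m=\{\varphi\in G:\varphi(x)=x+O(|x|^m)\}$. The Lie algebra $\mathfrak{k}_k$ of $K_k$ is identified with polynomial vector fields $V=V_1+V_2+\dots+V_{k+2}$ with $V_m$ having homogeneous components of degree $m$ (so $V(0)=0$); it acts on $\mathcal{F}_k$ by $j^k\Gamma\mapsto j^k(\mathcal{L}_V\Gamma)$, where $(\mathcal{L}_V\Gamma)^l_{ij}=V^k\partial_k\Gamma^l_{ij}-\Gamma^k_{ij}\partial_kV^l+\Gamma^l_{kj}\partial_iV^k+\Gamma^l_{ik}\partial_jV^k+\partial_i\partial_jV^l$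 (this is well defined on $k$-jets since $V(0)=0$). The stabilizer subalgebra of $j^k\Gamma$ is $\{V\in\mathfrak{k}_k: j^k(\mathcal{L}_V\Gamma)=0\}$. *)

From mathcomp Require Import all_boot all_order all_algebra.
From mathcomp Require Import reals.
From mathcomp Require Import mpoly.
Set Implicit Arguments. Unset Strict Implicit. Unset Printing Implicit Defensive.
Import Order.TTheory GRing.Theory Num.Theory.
Local Open Scope ring_scope.

(* A (polynomial representative of a) jet of Christoffel symbols:
   G l i j = Gamma^l_{ij}, a polynomial in x_0..x_{n-1}. *)
Definition chris (R : realType) (n : nat) := 'I_n -> 'I_n -> 'I_n -> {mpoly R[n]}.

Definition vfield (R : realType) (n : nat) := 'I_n -> {mpoly R[n]}.

(* F_k : symmetric Christoffel symbols with polynomial entries of degree <= k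
   (the k-jets at 0, identified with their Taylor polynomials). *)
Definition conn_jet (R : realType) (n k : nat) (G : chris R n) : Prop :=
  forall l i j, G l i j = G l j i /\
                (forall m : 'X_{1..n}, (k < mdeg m)%N -> (G l i j)@_m = 0).

Definition kalg (R : realType) (n k : nat) (V : vfield R n) : Prop :=
  forall l, (V l)@_0%MM = 0 /\
            (forall m : 'X_{1..n}, (k.+2 < mdeg m)%N -> (V l)@_m = 0).

Definition lie (R : realType) (n : nat) (V : vfield R n) (G : chris R n)
  (l i j : 'I_n) : {mpoly R[n]} :=
    \sum_(a < n) (V a * mderiv a (G l i j))
  - \sum_(a < n) (G a i j * mderiv a (V l))
  + \sum_(a < n) (G l a j * mderiv i (V a))
  + \sum_(a < n) (G l i a * mderiv j (V a))
  + mderiv i (mderiv j (V l)).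

Definition jet_zero (R : realType) (n k : nat) (p : {mpoly R[n]}) : Prop :=
  forall m : 'X_{1..n}, (mdeg m <= k)%N -> p@_m = 0.

Definition stab (R : realType) (n k : nat) (G : chris R n) (V : vfield R n) : Prop :=
  kalg k V /\ forall l i j, jet_zero k (lie V G l i j).

(* Standard topology of the finite-dimensional real vector space F_k,
   given by the sup-norm on the (finitely many) coefficients. *)
Definition jet_close (R : realType) (n : nat) (e : R) (G G' : chris R n) : Prop :=
  forall l i j (m : 'X_{1..n}), `|(G' l i j)@_m - (G l i j)@_m| < e.

Definition jet_open (R : realType) (n k : nat) (S : chris R n -> Prop) : Prop :=
  forall G, S G -> exists2 e : R, 0 < e &
    forall G', conn_jet k G' -> jet_close e G G' -> S G'.

Definition jet_dense (R : realType) (n k : nat) (S : chris R n -> Prop) : Prop :=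
  forall G, conn_jet k G -> forall e : R, 0 < e ->
    exists G', S G' /\ jet_close e G G'.

(* A vector field stabilizing a jet is determined by its linear part: the
   coefficient of degree d of L_V Gamma contains the coefficients of degree
   d + 2 of V only through d_i d_j V^l, so when V_1 = 0 the equations
   j^k(L_V Gamma) = 0 kill V_2, V_3, ... inductively.  For k = 0 the only
   equation is (L_V Gamma)(0) = 0, which prescribes the Hessian of V at 0 in
   terms of V_1 and is always solvable, since Gamma(0) is symmetric.
   For k >= 1, adding suitable multiples of the degree-0 equations to the
   degree-1 equations and antisymmetrizing in two indices eliminates the
   second and third derivatives of V.  This leaves linear equations on the n^2
   entries of V_1, with coefficients polynomial in the jet.  An n^2 x n^2 minor
   is diagonal with nonzero entries at the jet Gamma^(i+1)_ii = x_(i+1)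
   (indices mod n >= 3), so its determinant is a nonzero polynomial function
   on F_k: its nonvanishing locus is open and dense, and V_1 = 0 there. *)

From mathcomp Require Import all_boot all_order all_algebra.
From mathcomp Require Import reals.
From mathcomp Require Import mpoly.
From mathcomp Require Import ring lra zify.
From mathcomp Require Import fingroup perm.
From Stdlib Require Import FunctionalExtensionality.
Import Order.TTheory GRing.Theory Num.Theory.
Local Open Scope ring_scope.
Set Implicit Arguments. Unset Strict Implicit. Unset Printing Implicit Defensive.

Section StabilizerEquations.
Variables (R : realType) (n : nat).
Implicit Types (p q : {mpoly R[n]}) (V W : vfield R n) (G : chris R n).

Lemma mcoeff0M p q : (p * q)@_0%MM = p@_0%MM * q@_0%MM.
Proof. exact: rmorphM. Qed.

Lemma mcoeff0_deriv (a : 'I_n) p : (mderiv a p)@_0%MM = p@_U_(a).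
Proof. by rewrite mcoeff_deriv add0m mnmE mulr1n. Qed.

Lemma mcoeffU1M (m : 'I_n) p q :
  (p * q)@_U_(m) = p@_0%MM * q@_U_(m) + p@_U_(m) * q@_0%MM.
Proof. by rewrite -mcoeff0_deriv mderivM mcoeffD !mcoeff0M !mcoeff0_deriv addrC. Qed.

Lemma mcoeff_sum (I : Type) (r : seq I) (P : pred I) (F : I -> {mpoly R[n]}) m :
  (\sum_(i <- r | P i) F i)@_m = \sum_(i <- r | P i) (F i)@_m.
Proof. exact: raddf_sum. Qed.

Definition lie0 V G l i j := (lie V G l i j)@_0%MM.
Definition lie1 V G l i j m := (lie V G l i j)@_U_(m).

Lemma lie0E V G l i j : lie0 V G l i j =
    \sum_(a < n) (V a)@_0%MM * (G l i j)@_U_(a)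
  - \sum_(a < n) (G a i j)@_0%MM * (V l)@_U_(a)
  + \sum_(a < n) (G l a j)@_0%MM * (V a)@_U_(i)
  + \sum_(a < n) (G l i a)@_0%MM * (V a)@_U_(j)
  + (mderiv i (mderiv j (V l)))@_0%MM.
Proof.
rewrite /lie0 /lie !mcoeffD mcoeffN; congr (_ - _ + _ + _ + _);
by rewrite mcoeff_sum; apply: eq_bigr => a _; rewrite mcoeff0M mcoeff0_deriv.
Qed.

Lemma lie1E V G l i j m : lie1 V G l i j m =
    \sum_(a < n) ((V a)@_0%MM * (mderiv a (G l i j))@_U_(m) + (V a)@_U_(m) * (G l i j)@_U_(a))
  - \sum_(a < n) ((G a i j)@_0%MM * (mderiv a (V l))@_U_(m) + (G a i j)@_U_(m) * (V l)@_U_(a))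
  + \sum_(a < n) ((G l a j)@_0%MM * (mderiv i (V a))@_U_(m) + (G l a j)@_U_(m) * (V a)@_U_(i))
  + \sum_(a < n) ((G l i a)@_0%MM * (mderiv j (V a))@_U_(m) + (G l i a)@_U_(m) * (V a)@_U_(j))
  + (mderiv i (mderiv j (V l)))@_U_(m).
Proof.
rewrite /lie1 /lie !mcoeffD mcoeffN; congr (_ - _ + _ + _ + _);
by rewrite mcoeff_sum; apply: eq_bigr => a _; rewrite mcoeffU1M !mcoeff0_deriv.
Qed.

(* Adding these multiples of the degree-0 equations cancels the second
   derivatives of V in the degree-1 equations. *)
Definition lie1_red V G (l i j m : 'I_n) := lie1 V G l i j m
  + \sum_(a < n) ((G a i j)@_0%MM * lie0 V G l m a - (G l a j)@_0%MM * lie0 V G a m i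
                  - (G l i a)@_0%MM * lie0 V G a m j).

(* The third derivatives left in [lie1_red] are symmetric in [j] and [m]. *)
Definition phi V G l i j m := lie1_red V G l i j m - lie1_red V G l i m j.

Definition phi_at V G (x : 'I_n * 'I_n * 'I_n * 'I_n) := phi V G x.1.1.1 x.1.1.2 x.1.2 x.2.

Lemma lie1_red_high W G : (forall l, (W l)@_0%MM = 0) ->
    (forall l s, (W l)@_U_(s) = 0) ->
  forall l i j m, lie1_red W G l i j m = (mderiv m (mderiv i (mderiv j (W l))))@_0%MM.
Proof.
move=> W0 W1 l i j m.
have lie0W x y z : lie0 W G x y z = (mderiv z (W x))@_U_(y).
  rewrite lie0E !big1 ?(subrr, add0r) ?mcoeff0_deriv // => a _;
  by rewrite ?W0 ?W1 ?mulr0 ?mul0r.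
rewrite /lie1_red lie1E mcoeff0_deriv -sumrN addrAC -!big_split /=.
by rewrite big1 ?add0r // => a _; rewrite !lie0W W0 !W1; ring.
Qed.

Lemma phi_high W G : (forall l, (W l)@_0%MM = 0) -> (forall l s, (W l)@_U_(s) = 0) ->
  forall l i j m, phi W G l i j m = 0.
Proof.
move=> W0 W1 l i j m; rewrite /phi !lie1_red_high //.
by rewrite [mderiv i (mderiv j _)]mderiv_comm mderiv_comm
  [mderiv m (mderiv i _)]mderiv_comm subrr.
Qed.

Definition vcomb (c : R) V W : vfield R n := fun a => c *: V a + W a.

Lemma lie_comb c V W G l i j :
  lie (vcomb c V W) G l i j = c *: lie V G l i j + lie W G l i j.
Proof.
have combl (F1 F2 X : 'I_n -> {mpoly R[n]}) : \sum_(a < n) (c *: F1 a + F2 a) * X a =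
    c *: \sum_(a < n) F1 a * X a + \sum_(a < n) F2 a * X a.
  by rewrite scaler_sumr -big_split; apply: eq_bigr => a _; rewrite mulrDl scalerAl.
have combr (X F1 F2 : 'I_n -> {mpoly R[n]}) : \sum_(a < n) X a * (c *: F1 a + F2 a) =
    c *: \sum_(a < n) X a * F1 a + \sum_(a < n) X a * F2 a.
  by rewrite scaler_sumr -big_split; apply: eq_bigr => a _; rewrite mulrDr scalerAr.
have deriv_comb (X : 'I_n -> {mpoly R[n]}) (b : 'I_n -> 'I_n) (F1 F2 : 'I_n -> {mpoly R[n]}) :
    \sum_(a < n) X a * mderiv (b a) (c *: F1 a + F2 a) =
    \sum_(a < n) X a * (c *: mderiv (b a) (F1 a) + mderiv (b a) (F2 a)).
  by apply: eq_bigr => a _; rewrite mderivD mderivZ.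
rewrite /lie /vcomb combl !deriv_comb !combr !mderivD !mderivZ -!mul_mpolyC; ring.
Qed.

Lemma lie0_comb c V W G l i j :
  lie0 (vcomb c V W) G l i j = c * lie0 V G l i j + lie0 W G l i j.
Proof. by rewrite /lie0 lie_comb mcoeffD mcoeffZ. Qed.

Lemma lie1_comb c V W G l i j m :
  lie1 (vcomb c V W) G l i j m = c * lie1 V G l i j m + lie1 W G l i j m.
Proof. by rewrite /lie1 lie_comb mcoeffD mcoeffZ. Qed.

Lemma phi_comb c V W G l i j m :
  phi (vcomb c V W) G l i j m = c * phi V G l i j m + phi W G l i j m.
Proof.
have red_comb x y z w : lie1_red (vcomb c V W) G x y z w =
    c * lie1_red V G x y z w + lie1_red W G x y z w.
  rewrite /lie1_red lie1_comb [in RHS]mulrDr mulr_sumr addrACA -big_split /=.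
  by congr (_ + _); apply: eq_bigr => a _; rewrite !lie0_comb; ring.
by rewrite /phi !red_comb; ring.
Qed.

Lemma phi_sum (I : Type) (r : seq I) (c : I -> R) (F : I -> vfield R n) G l i j m :
  phi (fun a => \sum_(k <- r) c k *: F k a) G l i j m =
  \sum_(k <- r) c k * phi (F k) G l i j m.
Proof.
elim: r => [|k r IHr]; first by rewrite big_nil phi_high // => *; rewrite big_nil mcoeff0.
have -> : (fun a => \sum_(k0 <- k :: r) c k0 *: F k0 a) =
    vcomb (c k) (F k) (fun a => \sum_(k0 <- r) c k0 *: F k0 a).
  by apply: functional_extensionality => a; rewrite big_cons.
by rewrite phi_comb IHr big_cons.
Qed.

Definition elin (v : 'I_n * 'I_n) : vfield R n := fun l => (l == v.1)%:R *: 'X_(v.2).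

Lemma elin_coef0 v l : (elin v l)@_0%MM = 0.
Proof. by rewrite /elin mcoeffZ mcoeffX mnm1_eq0 mulr0. Qed.

Lemma elin_coefU v l s : (elin v l)@_U_(s) = ((l, s) == v)%:R.
Proof. by case: v => r t; rewrite /elin mcoeffZ mcoeffXU -natrM -mulnb /= [t == s]eq_sym. Qed.

Lemma phi_lin V G : (forall l, (V l)@_0%MM = 0) -> forall x,
  phi_at V G x = \sum_(v : 'I_n * 'I_n) (V v.1)@_U_(v.2) * phi_at (elin v) G x.
Proof.
move=> V0 [[[l i] j] m]; rewrite /phi_at /=.
pose V1 a := \sum_(v : 'I_n * 'I_n) (V v.1)@_U_(v.2) *: elin v a.
have eV : V = vcomb 1 V1 (fun a => V a - V1 a).
  by apply: functional_extensionality => a; rewrite /vcomb scale1r addrC subrK.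
rewrite {1}eV phi_comb mul1r phi_sum (phi_high (W := fun a => V a - V1 a)) ?addr0 // => a.
  by rewrite mcoeffB V0 mcoeff_sum big1 ?subrr // => v _; rewrite mcoeffZ elin_coef0 mulr0.
move=> s; rewrite mcoeffB mcoeff_sum (bigD1 (a, s)) //= big1 ?addr0 => [|v].
  by rewrite mcoeffZ elin_coefU eqxx mulr1 subrr.
by rewrite mcoeffZ elin_coefU eq_sym => /negbTE ->; rewrite mulr0.
Qed.

Lemma stab_comb k G c V W : stab k G V -> stab k G W -> stab k G (vcomb c V W).
Proof.
move=> [Vk Vlie] [Wk Wlie]; split=> [l|l i j m hm]; last first.
  by rewrite lie_comb mcoeffD mcoeffZ Vlie // Wlie // mulr0 addr0.
have [V0 Vhigh] := Vk l; have [W0 Whigh] := Wk l.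
split=> [|m hm]; rewrite /vcomb mcoeffD mcoeffZ ?V0 ?W0 ?Vhigh ?Whigh ?mulr0 ?addr0 //.
Qed.

Lemma phi_stab k G V : (0 < k)%N -> stab k G V -> forall x, phi_at V G x = 0.
Proof.
move=> k_gt0 [_ Vlie] [[[l i] j] m].
have lie0_eq0 x y z : lie0 V G x y z = 0 by apply: Vlie; rewrite mdeg0.
have lie1_eq0 x y z w : lie1 V G x y z w = 0 by apply: Vlie; rewrite mdeg1.
by rewrite /phi_at /phi /lie1_red !lie1_eq0 !big1 ?subrr // => a _; rewrite !lie0_eq0 !mulr0 !subrr.
Qed.

Lemma mcoeffM_eq0l p q m :
  (forall k, (mdeg k <= mdeg m)%N -> p@_k = 0) -> (p * q)@_m = 0.
Proof.
move=> p_low; rewrite mcoeffM big1 // => k hk; rewrite p_low ?mul0r //.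
by apply: (leq_trans (leq_addr (mdeg k.2) _)); rewrite -mdegD -(eqP hk).
Qed.

Lemma mcoeffM_eq0r p q m :
  (forall k, (mdeg k <= mdeg m)%N -> q@_k = 0) -> (p * q)@_m = 0.
Proof. by move=> q_low; rewrite mulrC; apply: mcoeffM_eq0l. Qed.

Lemma mdeg_gt0_split (M : 'X_{1..n}) :
  (0 < mdeg M)%N -> exists i m, M = (m + U_(i))%MM /\ mdeg m = (mdeg M).-1.
Proof.
move=> M_gt0; have [i Mi] : exists i, M i != 0%N.
  apply/existsP; apply: contraLR M_gt0; rewrite negb_exists => /forallP M0.
  suff -> : M = 0%MM by rewrite mdeg0.
  by apply/mnmP => i; rewrite mnm0E; apply/eqP; rewrite -[_ == _]negbK M0.
have UM : (U_(i) <= M)%MM by rewrite lep1mP.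
exists i, (M - U_(i))%MM; rewrite submK //; split=> //.
by rewrite -[in RHS](submK UM) mdegD mdeg1 addn1.
Qed.

Lemma lie_coef_top V G l i j (m : 'X_{1..n}) :
    (forall a (M : 'X_{1..n}), (mdeg M <= (mdeg m).+1)%N -> (V a)@_M = 0) ->
  (lie V G l i j)@_m =
    (V l)@_(m + U_(i) + U_(j))%MM *+ ((m + U_(i))%MM j).+1 *+ (m i).+1.
Proof.
move=> V_low.
have dV_low b a (k : 'X_{1..n}) : (mdeg k <= mdeg m)%N -> (mderiv b (V a))@_k = 0.
  by move=> hk; rewrite mcoeff_deriv V_low ?mul0rn // mdegD mdeg1 addn1.
rewrite /lie !mcoeffD mcoeffN !mcoeff_deriv !mcoeff_sum.
rewrite big1 => [|a _]; last by apply: mcoeffM_eq0l => k hk; apply: V_low; exact: leqW.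
by rewrite !big1 ?oppr0 ?add0r // => a _; apply: mcoeffM_eq0r => k; exact: dV_low.
Qed.

Lemma stab_eq0 k G V : stab k G V -> (forall l s, (V l)@_U_(s) = 0) -> forall l, V l = 0.
Proof.
move=> [Vk Vlie] V1.
suff Vdeg d l (M : 'X_{1..n}) : (mdeg M <= d)%N -> (V l)@_M = 0.
  by move=> l; apply/mpolyP => M; rewrite mcoeff0 (Vdeg (mdeg M)).
elim: d l M => [|d IHd] l M.
  by rewrite leqn0 mdeg_eq0 => /eqP ->; case: (Vk l).
rewrite leq_eqVlt ltnS => /orP [/eqP hM|]; last exact: IHd.
case: d IHd hM => [_ /eqP/mdeg1P [i /eqP ->]|d IHd hM]; first exact: V1.
have [/(Vk l).2 //|Mk] := ltnP k.+2 (mdeg M).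
have M_gt0 : (0 < mdeg M)%N by rewrite hM.
have [x [m0 [eM hm0]]] := mdeg_gt0_split M_gt0.
have m0_gt0 : (0 < mdeg m0)%N by rewrite hm0 hM.
have [y [m [em hm]]] := mdeg_gt0_split m0_gt0.
have dm : mdeg m = d by rewrite hm hm0 hM.
have m_le_k : (mdeg m <= k)%N by rewrite dm -ltnS -ltnS -hM.
have := Vlie l y x m m_le_k.
rewrite lie_coef_top -?em -?eM => [/eqP|a M' hM']; last by apply: IHd; rewrite -dm.
by rewrite !mulrn_eq0 /= => /eqP.
Qed.

Definition cyc_conn : chris R n :=
  fun l i j => ((i == j) && (l == ordS i))%:R *: 'X_(ordS i).

Lemma cyc_conn_coef0 l i j : (cyc_conn l i j)@_0%MM = 0.
Proof. by rewrite /cyc_conn mcoeffZ mcoeffX mnm1_eq0 mulr0. Qed.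

Lemma cyc_conn_coefU l i j m :
  (cyc_conn l i j)@_U_(m) = ((i == j) && (l == ordS i))%:R * (ordS i == m)%:R.
Proof. by rewrite /cyc_conn mcoeffZ mcoeffXU. Qed.

Lemma elin_dd v l i j m : (mderiv i (mderiv j (elin v l)))@_U_(m) = 0.
Proof.
rewrite !mcoeff_deriv /elin mcoeffZ mcoeffX.
suff /negbTE -> : (U_(v.2) != U_(m) + U_(i) + U_(j))%MM by rewrite mulr0 !mul0rn.
by apply/eqP => /(congr1 mdeg); rewrite !mdegD !mdeg1.
Qed.

Lemma lie1_cyc r s l i j m : lie1 (elin (r, s)) cyc_conn l i j m =
    (s == m)%:R * ((i == j) && (l == ordS i))%:R * (ordS i == r)%:R
  - ((i == j) && (s == ordS i))%:R * (ordS i == m)%:R * (l == r)%:R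
  + ((r == j) && (l == ordS r))%:R * (ordS r == m)%:R * (s == i)%:R
  + ((i == r) && (l == ordS i))%:R * (ordS i == m)%:R * (s == j)%:R.
Proof.
rewrite lie1E elin_dd addr0; congr (_ - _ + _ + _);
  [rewrite (big_only1 r) | rewrite (big_only1 s) | rewrite (big_only1 r)
  | rewrite (big_only1 r)] => //; try move=> a /negbTE ar _;
  rewrite ?elin_coef0 ?cyc_conn_coef0 ?mul0r ?add0r ?elin_coefU ?cyc_conn_coefU
    /= ?xpair_eqE ?eqxx ?ar ?andbT ?andbF ?andFb ?mulr0 ?mul0r ?mulrA
    ?[m == s]eq_sym ?[i == s]eq_sym ?[j == s]eq_sym //.
Qed.

Lemma ordS_neq (n_gt1 : (1 < n)%N) (p : 'I_n) : (ordS p == p) = false.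
Proof.
apply/negbTE/eqP => /(congr1 val) /=; case: p => p p_lt /=.
have [p1_lt|p1_ge] := ltnP p.+1 n; first by rewrite modn_small //; lia.
have -> : p.+1 = n by lia.
by rewrite modnn; lia.
Qed.

Lemma ordSS_neq (n_gt2 : (2 < n)%N) (p : 'I_n) : (ordS (ordS p) == p) = false.
Proof.
apply/negbTE/eqP => /(congr1 val) /=; case: p => p p_lt /=.
have [p1_lt|p1_ge] := ltnP p.+1 n.
  rewrite (modn_small p1_lt); have [p2_lt|p2_ge] := ltnP p.+2 n.
    by rewrite modn_small //; lia.
  have -> : p.+2 = n by lia.
  by rewrite modnn; lia.
have -> : p.+1 = n by lia.
by rewrite modnn modn_small; lia.
Qed.

Lemma phi_cyc v l i j m : phi (elin v) cyc_conn l i j m =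
  lie1 (elin v) cyc_conn l i j m - lie1 (elin v) cyc_conn l i m j.
Proof. by rewrite /phi /lie1_red !big1 ?addr0 // => a _; rewrite !cyc_conn_coef0 !mul0r !subrr. Qed.

(* For each [u], an equation in which [elin u] is the only basis field
   contributing at [cyc_conn]; this is where [3 <= n] is needed. *)
Definition phi_row (u : 'I_n * 'I_n) : 'I_n * 'I_n * 'I_n * 'I_n :=
  if u.2 == ordS u.1 then (u.1, u.1, u.1, ordS u.1) else (ordS u.1, u.1, u.2, ordS u.1).

Definition cyc_diag (u : 'I_n * 'I_n) : R :=
  if u.2 == ordS u.1 then -1 else if u.2 == u.1 then 2 else 1.

Lemma cyc_diag_neq0 u : cyc_diag u != 0.
Proof.
rewrite /cyc_diag; case: ifP => _; first by rewrite oppr_eq0 oner_eq0.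
by case: ifP => _; rewrite ?pnatr_eq0 ?oner_eq0.
Qed.

Lemma phi_cyc_diag (n_gt2 : (2 < n)%N) w u :
  phi_at (elin w) cyc_conn (phi_row u) = (w == u)%:R * cyc_diag u.
Proof.
case: w u => r s [p q].
have pS := ordS_neq (ltnW n_gt2) p; have Sp : (p == ordS p) = false by rewrite eq_sym.
have pSS := ordSS_neq n_gt2 p; have SSp : (p == ordS (ordS p)) = false by rewrite eq_sym.
have SS a b : (ordS a == ordS b) = (a == b) by apply: inj_eq; exact: ordS_inj.
rewrite /phi_at /phi_row /cyc_diag /= xpair_eqE phi_cyc !lie1_cyc.
case: (eqVneq q (ordS p)) => [->|qSp] /=.
  rewrite !eqxx pS Sp /=.
  case: (eqVneq r p) => [->|rp]; first by rewrite !eqxx ?pS ?Sp ?pSS ?SSp /= ?andbF; ring.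
  by case: (eqVneq r (ordS p)) => [->|rSp] /=; rewrite ?SSp /=; ring.
have Spq : (ordS p == q) = false by rewrite eq_sym (negbTE qSp).
rewrite !eqxx !SS Sp Spq /= !andbT.
case: (eqVneq r p) => [->|rp].
  rewrite ?eqxx ?Sp ?pS /=.
  case: (eqVneq q p) => [->|qp]; rewrite ?eqxx /=; first by ring.
  by ring.
by rewrite /= ?andbF; case: (p == q); case: (s == ordS p) => /=; ring.
Qed.

Definition phi_mx G : 'M[R]_#|{: 'I_n * 'I_n}| :=
  \matrix_(u, v) phi_at (elin (enum_val v)) G (phi_row (enum_val u)).

Lemma phi_mx_cyc_det (n_gt2 : (2 < n)%N) : \det (phi_mx cyc_conn) != 0.
Proof.
have -> : phi_mx cyc_conn = diag_mx (\row_u cyc_diag (enum_val u)).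
  apply/matrixP => u v; rewrite !mxE phi_cyc_diag // (inj_eq enum_val_inj).
  by rewrite mulr_natl eq_sym.
by rewrite det_diag; apply/prodf_neq0 => u _; rewrite mxE cyc_diag_neq0.
Qed.

Lemma stab_lin_eq0 k G V : (0 < k)%N -> \det (phi_mx G) != 0 -> stab k G V ->
  forall l s, (V l)@_U_(s) = 0.
Proof.
move=> k_gt0 detG Vstab.
pose a : 'cV[R]_#|{: 'I_n * 'I_n}| := \col_v (V (enum_val v).1)@_U_((enum_val v).2).
have V0 l : (V l)@_0%MM = 0 by case: Vstab => /(_ l) [].
have phi_mx_a : phi_mx G *m a = 0.
  apply/matrixP => u j; rewrite !mxE.
  apply: etrans (phi_stab k_gt0 Vstab (phi_row (enum_val u))).
  rewrite phi_lin // (big_enum_val (fun v : 'I_n * 'I_n => _)).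
  by apply: eq_bigr => v _; rewrite !mxE mulrC.
have a0 : a = 0.
  have unit_phi_mx : phi_mx G \in unitmx by rewrite unitmxE unitfE.
  by rewrite -(mulKmx unit_phi_mx a) phi_mx_a mulmx0.
move=> l s; move/matrixP: a0 => /(_ (enum_rank (l, s)) ord0).
by rewrite !mxE enum_rankK.
Qed.

End StabilizerEquations.

Lemma norm_mulB_lt (R : realFieldType) (a a' b b' d e : R) :
    `|a' - a| < d -> `|b' - b| < d -> d <= 1 -> d * (`|a| + `|b| + 1) <= e ->
  `|a' * b' - a * b| < e.
Proof.
move=> near_a near_b d_le1 d_le.
have -> : a' * b' - a * b = (a' - a) * b' + a * (b' - b) by ring.
have nb' : `|b'| <= `|b| + 1.
  by have := ler_normD b (b' - b); rewrite addrC subrK addrC; lra.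
have t1 : `|a' - a| * `|b'| <= `|a' - a| * (`|b| + 1) by apply: ler_wpM2l.
have t2 : `|a' - a| * (`|b| + 1) < d * (`|b| + 1) by rewrite ltr_pM2r // ltr_pwDr.
have t3 : `|a| * `|b' - b| <= `|a| * d by apply: ler_wpM2l => //; exact: ltW.
by apply: le_lt_trans (ler_normD _ _) _; rewrite !normrM; lra.
Qed.

Lemma poly_nonroot_in (R : realFieldType) (P : {poly R}) (d : R) : P != 0 -> 0 < d ->
  exists t, [/\ 0 < t, t <= d & P.[t] != 0].
Proof.
move=> P_neq0 d_gt0; pose ts := [seq d / (j.+1)%:R | j <- iota 0 (size P)].
have ts_uniq : uniq ts.
  rewrite map_inj_uniq ?iota_uniq // => a b /eqP.
  rewrite eqr_div ?pnatr_eq0 ?lt0r_neq0 // => /eqP /(mulfI (lt0r_neq0 d_gt0)) /eqP.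
  by rewrite eqr_nat => /eqP [].
have /allPn [_ /mapP [j _ ->] root_j] : ~~ all (root P) ts.
  apply/negP => all_root; have := max_poly_roots P_neq0 all_root ts_uniq.
  by rewrite size_map size_iota ltnn.
exists (d / (j.+1)%:R); split=> //; first by rewrite divr_gt0 // ltr0n.
by rewrite ler_pdivrMr ?ltr0n // ler_peMr ?ler1n // ltW.
Qed.

Section JetPolynomials.
Variables (R : realType) (n : nat).
Implicit Types (F : chris R n -> R) (G H : chris R n).

Inductive jet_poly : (chris R n -> R) -> Prop :=
| jet_poly_cst c : jet_poly (fun _ => c)
| jet_poly_coef l i j m : jet_poly (fun G => (G l i j)@_m)
| jet_poly_add F1 F2 : jet_poly F1 -> jet_poly F2 -> jet_poly (fun G => F1 G + F2 G)
| jet_poly_mul F1 F2 : jet_poly F1 -> jet_poly F2 -> jet_poly (fun G => F1 G * F2 G).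

Lemma jet_poly_ext F1 F2 : F1 =1 F2 -> jet_poly F2 -> jet_poly F1.
Proof. by move=> /functional_extensionality ->. Qed.

Lemma jet_poly_opp F : jet_poly F -> jet_poly (fun G => - F G).
Proof.
move=> PF; apply: (@jet_poly_ext _ (fun G => -1 * F G)) => [G|]; first by rewrite mulN1r.
by apply: jet_poly_mul => //; exact: jet_poly_cst.
Qed.

Lemma jet_poly_sub F1 F2 : jet_poly F1 -> jet_poly F2 -> jet_poly (fun G => F1 G - F2 G).
Proof. by move=> PF1 PF2; apply: jet_poly_add => //; exact: jet_poly_opp. Qed.

Lemma jet_poly_sum (I : Type) (r : seq I) (P : pred I) (F : I -> chris R n -> R) :
  (forall i, jet_poly (F i)) -> jet_poly (fun G => \sum_(i <- r | P i) F i G).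
Proof.
move=> PF; elim: r => [|x r IHr].
  by apply: (@jet_poly_ext _ (fun _ => 0)) => [G|]; rewrite ?big_nil //; exact: jet_poly_cst.
apply: (@jet_poly_ext _ (fun G => (if P x then F x G else 0) + \sum_(i <- r | P i) F i G)).
  by move=> G; rewrite big_cons; case: (P x); rewrite ?add0r.
by apply: jet_poly_add => //; case: (P x) => //; exact: jet_poly_cst.
Qed.

Lemma jet_poly_prod (I : Type) (r : seq I) (P : pred I) (F : I -> chris R n -> R) :
  (forall i, jet_poly (F i)) -> jet_poly (fun G => \prod_(i <- r | P i) F i G).
Proof.
move=> PF; elim: r => [|x r IHr].
  by apply: (@jet_poly_ext _ (fun _ => 1)) => [G|]; rewrite ?big_nil //; exact: jet_poly_cst.
apply: (@jet_poly_ext _ (fun G => (if P x then F x G else 1) * \prod_(i <- r | P i) F i G)).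
  by move=> G; rewrite big_cons; case: (P x); rewrite ?mul1r.
by apply: jet_poly_mul => //; case: (P x) => //; exact: jet_poly_cst.
Qed.

Lemma jet_poly_coefM (p : {mpoly R[n]}) (D : chris R n -> {mpoly R[n]}) M :
  (forall m, jet_poly (fun G => (D G)@_m)) -> jet_poly (fun G => (p * D G)@_M).
Proof.
move=> PD; apply: (@jet_poly_ext _ (fun G =>
    \sum_(k : 'X_{1..n < (mdeg M).+1, (mdeg M).+1} | M == (k.1 + k.2)%MM)
       p@_k.1 * (D G)@_k.2)) => [G|]; first by rewrite mcoeffM.
by apply: jet_poly_sum => k; apply: jet_poly_mul => //; exact: jet_poly_cst.
Qed.

Lemma jet_poly_lie V l i j M : jet_poly (fun G => (lie V G l i j)@_M).
Proof.
have Pderiv a l' i' j' m : jet_poly (fun G => (mderiv a (G l' i' j'))@_m).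
  apply: (@jet_poly_ext _ (fun G => (G l' i' j')@_(m + U_(a)) * ((m a).+1)%:R)).
    by move=> G; rewrite mcoeff_deriv mulr_natr.
  by apply: jet_poly_mul; [exact: jet_poly_coef | exact: jet_poly_cst].
apply: (@jet_poly_ext _ (fun G =>
    \sum_(a < n) (V a * mderiv a (G l i j))@_M
  - \sum_(a < n) (G a i j * mderiv a (V l))@_M
  + \sum_(a < n) (G l a j * mderiv i (V a))@_M
  + \sum_(a < n) (G l i a * mderiv j (V a))@_M
  + (mderiv i (mderiv j (V l)))@_M)).
  by move=> G; rewrite /lie !mcoeffD mcoeffN; congr (_ - _ + _ + _ + _); rewrite mcoeff_sum.
have Pmulr (D : chris R n -> {mpoly R[n]}) p m :
    (forall m', jet_poly (fun G => (D G)@_m')) -> jet_poly (fun G => (D G * p)@_m).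
  move=> PD; apply: (@jet_poly_ext _ (fun G => (p * D G)@_m)) => [G|]; first by rewrite mulrC.
  exact: jet_poly_coefM.
have Pcoef l' i' j' m : jet_poly (fun G => (G l' i' j')@_m) := jet_poly_coef l' i' j' m.
apply: jet_poly_add; last exact: jet_poly_cst.
apply: jet_poly_add; first apply: jet_poly_add; first apply: jet_poly_sub.
- by apply: jet_poly_sum => a; apply: jet_poly_coefM; exact: Pderiv.
- by apply: jet_poly_sum => a; apply: Pmulr.
- by apply: jet_poly_sum => a; apply: Pmulr.
- by apply: jet_poly_sum => a; apply: Pmulr.
Qed.

Lemma jet_poly_phi V x : jet_poly (fun G => phi_at V G x).
Proof.
rewrite /phi_at /phi /lie1_red /lie1 /lie0.
by do !(apply: jet_poly_sub || apply: jet_poly_add || apply: jet_poly_mul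
        || apply: jet_poly_sum => ? || apply: jet_poly_lie || apply: jet_poly_coef).
Qed.

Lemma jet_poly_det_phi_mx : jet_poly (fun G => \det (phi_mx G)).
Proof.
apply: (@jet_poly_ext _ (fun G => \sum_(s : 'S_#|{: 'I_n * 'I_n}|) (-1) ^+ s *
    \prod_u phi_at (elin R (enum_val (s u))) G (phi_row (enum_val u)))).
  by move=> G; rewrite /determinant; apply: eq_bigr => s _; congr (_ * _);
    apply: eq_bigr => u _; rewrite mxE.
apply: jet_poly_sum => s; apply: jet_poly_mul; first exact: jet_poly_cst.
by apply: jet_poly_prod => u; exact: jet_poly_phi.
Qed.

Definition jet_continuous F := forall G (e : R), 0 < e -> exists2 d : R, 0 < d &
  forall G', jet_close d G G' -> `|F G' - F G| < e.

Lemma jet_close_le (d d' : R) G G' : d <= d' -> jet_close d G G' -> jet_close d' G G'.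
Proof. by move=> le_dd' close l i j m; apply: lt_le_trans (close l i j m) le_dd'. Qed.

Lemma jet_continuous2 F1 F2 G (e1 e2 : R) : jet_continuous F1 -> jet_continuous F2 ->
  0 < e1 -> 0 < e2 -> exists2 d : R, 0 < d & forall G', jet_close d G G' ->
    `|F1 G' - F1 G| < e1 /\ `|F2 G' - F2 G| < e2.
Proof.
move=> cF1 cF2 e1_gt0 e2_gt0.
have [d1 d1_gt0 close1] := cF1 G e1 e1_gt0; have [d2 d2_gt0 close2] := cF2 G e2 e2_gt0.
exists (Num.min d1 d2) => [|G' close]; first by rewrite lt_min d1_gt0 d2_gt0.
by split; [apply: close1 | apply: close2]; apply: jet_close_le close; rewrite ge_min lexx ?orbT.
Qed.

Lemma jet_poly_continuous F : jet_poly F -> jet_continuous F.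
Proof.
elim=> {F} [c | l i j m | F1 F2 _ cF1 _ cF2 | F1 F2 _ cF1 _ cF2] G e e_gt0.
- by exists 1 => // G' _; rewrite subrr normr0.
- by exists e.
- have [d d_gt0 close] := jet_continuous2 G cF1 cF2 (divr_gt0 e_gt0 (ltr0n R 2))
    (divr_gt0 e_gt0 (ltr0n R 2)).
  exists d => // G' /close [near1 near2].
  have := ler_normD (F1 G' - F1 G) (F2 G' - F2 G).
  have -> : F1 G' - F1 G + (F2 G' - F2 G) = F1 G' + F2 G' - (F1 G + F2 G) by ring.
  lra.
- pose A := `|F1 G| + `|F2 G| + 1.
  have A_gt0 : 0 < A by rewrite /A ltr_pwDr // addr_ge0.
  pose d0 := Num.min 1 (e / A).
  have d0_gt0 : 0 < d0 by rewrite lt_min ltr01 divr_gt0.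
  have [d d_gt0 close] := jet_continuous2 G cF1 cF2 d0_gt0 d0_gt0.
  exists d => // G' /close [near1 near2]; apply: norm_mulB_lt near1 near2 _ _.
    by rewrite ge_min lexx.
  by rewrite -ler_pdivlMr // ge_min lexx orbT.
Qed.

Definition jet_line G H (t : R) : chris R n := fun l i j => G l i j + t *: H l i j.

Lemma jet_poly_line F G H : jet_poly F ->
  exists P : {poly R}, forall t, F (jet_line G H t) = P.[t].
Proof.
elim=> {F} [c | l i j m | F1 F2 _ [P1 eP1] _ [P2 eP2] | F1 F2 _ [P1 eP1] _ [P2 eP2]].
- by exists c%:P => t; rewrite hornerC.
- exists ((H l i j)@_m *: 'X + ((G l i j)@_m)%:P) => t.
  by rewrite /jet_line mcoeffD mcoeffZ hornerD hornerZ hornerX hornerC addrC mulrC.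
- by exists (P1 + P2) => t; rewrite eP1 eP2 hornerD.
- by exists (P1 * P2) => t; rewrite eP1 eP2 hornerM.
Qed.

Definition jet_norm H : R :=
  \sum_(x : 'I_n * 'I_n * 'I_n) \sum_(m <- msupp (H x.1.1 x.1.2 x.2)) `|(H x.1.1 x.1.2 x.2)@_m|.

Lemma jet_norm_ge0 H : 0 <= jet_norm H.
Proof. by rewrite sumr_ge0 // => x _; rewrite sumr_ge0. Qed.

Lemma coef_le_jet_norm H l i j m : `|(H l i j)@_m| <= jet_norm H.
Proof.
rewrite /jet_norm (bigD1 (l, i, j)) //= -[X in X <= _]addr0 lerD ?sumr_ge0 //.
  case: (boolP (m \in msupp (H l i j))) => [m_supp | /memN_msupp_eq0 ->].
    by rewrite (bigD1_seq m) ?msupp_uniq //= lerDl sumr_ge0.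
  by rewrite normr0 sumr_ge0.
by move=> x _; rewrite sumr_ge0.
Qed.

End JetPolynomials.

Section OrderZero.
Variables (R : realType) (n : nat) (G : chris R n) (A : 'M[R]_n).

(* The value of [d_i d_j V^l (0)] forced by the equation [(L_V Gamma)(0) = 0]
   when [V_1 = A x]. *)
Definition stab0_hess l i j : R :=
  \sum_(a < n) (G a i j)@_0%MM * A l a - \sum_(a < n) (G l a j)@_0%MM * A a i
  - \sum_(a < n) (G l i a)@_0%MM * A a j.

Definition stab0_field : vfield R n := fun l =>
  \sum_(s < n) A l s *: 'X_s
  + \sum_(x < n) \sum_(y < n) (stab0_hess l x y / 2) *: ('X_x * 'X_y).

Lemma stab0_field_coef l m : (stab0_field l)@_m =
  \sum_(s < n) A l s * (U_(s) == m)%MM%:R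
  + \sum_(x < n) \sum_(y < n) stab0_hess l x y / 2 * ((U_(x) + U_(y))%MM == m)%:R.
Proof.
rewrite mcoeffD !mcoeff_sum; congr (_ + _); apply: eq_bigr => x _.
  by rewrite mcoeffZ mcoeffX.
by rewrite mcoeff_sum; apply: eq_bigr => y _; rewrite mcoeffZ -mpolyXD mcoeffX.
Qed.

Lemma stab0_field_coef_deg l m :
  (mdeg m != 1)%N -> (mdeg m != 2)%N -> (stab0_field l)@_m = 0.
Proof.
move=> m_neq1 m_neq2; rewrite stab0_field_coef !big1 ?addr0 // => x _.
  rewrite big1 // => y _; have [eU|_] := eqVneq (U_(x) + U_(y))%MM m.
    by move: m_neq2; rewrite -eU mdegD !mdeg1.
  by rewrite /= mulr0n mulr0.
have [eU|_] := eqVneq U_(x)%MM m; last by rewrite /= mulr0n mulr0.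
by move: m_neq1; rewrite -eU mdeg1.
Qed.

Lemma stab0_field_coefU l s : (stab0_field l)@_U_(s) = A l s.
Proof.
rewrite stab0_field_coef [X in _ + X]big1 ?addr0 => [|x _].
  by rewrite (big_only1 s) ?eqxx ?mulr1 // => a /negbTE sa _; rewrite eq_mnm1 sa mulr0.
rewrite big1 // => y _; case: eqP => [/(congr1 mdeg)|_]; last by rewrite mulr0.
by rewrite mdegD !mdeg1.
Qed.

Lemma mderiv_mpolyX (i j : 'I_n) : mderiv j ('X_i : {mpoly R[n]}) = ((i == j)%:R)%:MP.
Proof.
rewrite mderivX mnm1E; case: eqP => [->|_]; last by rewrite scale0r mpolyC0.
have -> : (U_(j) - U_(j))%MM = 0%MM by apply/mnmP => a; rewrite !mnmE subnn.
by rewrite mpolyX0 scale1r mpolyC1.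
Qed.

Lemma mderiv2_mpolyXX (i j x y : 'I_n) :
  (mderiv i (mderiv j ('X_x * 'X_y : {mpoly R[n]})))@_0%MM =
  (x == j)%:R * (y == i)%:R + (y == j)%:R * (x == i)%:R.
Proof.
rewrite mderivM !mderiv_mpolyX mderivD mderiv_mulC [X in _ + mderiv i X]mulrC mderiv_mulC.
by rewrite !mderiv_mpolyX mcoeffD !mcoeff0M !mpolyCK.
Qed.

Lemma stab0_field_dd l i j : (mderiv i (mderiv j (stab0_field l)))@_0%MM =
  (stab0_hess l j i + stab0_hess l i j) / 2.
Proof.
have mderiv_sum (I : Type) (r : seq I) (F : I -> {mpoly R[n]}) a :
  mderiv a (\sum_(k <- r) F k) = \sum_(k <- r) mderiv a (F k) by exact: raddf_sum.
rewrite /stab0_field [mderiv j _]mderivD [mderiv j (\sum_(s < n) _)]mderiv_sum.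
rewrite [mderiv j (\sum_(x < n) _)]mderiv_sum [mderiv i _]mderivD.
rewrite [mderiv i (\sum_(s < n) _)]mderiv_sum [mderiv i (\sum_(x < n) _)]mderiv_sum.
rewrite mcoeffD !mcoeff_sum big1 ?add0r => [|s _]; last first.
  by rewrite mderivZ mderiv_mpolyX mderivZ mderivC scaler0 mcoeff0.
under eq_bigr => x _ do rewrite [mderiv j _]mderiv_sum [mderiv i _]mderiv_sum mcoeff_sum.
under eq_bigr => x _ do under eq_bigr => y _ do
  rewrite !mderivZ mcoeffZ mderiv2_mpolyXX mulrDr.
have delta2 (F : 'I_n -> 'I_n -> R) a b :
    \sum_(x < n) \sum_(y < n) F x y * ((x == a)%:R * (y == b)%:R) = F a b.
  rewrite (big_only1 a) // => [|x /negbTE xa _]; last first.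
    by apply: big1 => y _; rewrite xa mul0r mulr0.
  by rewrite (big_only1 b) // => [|y /negbTE yb _]; rewrite ?yb !eqxx ?mulr1 ?mulr0.
under eq_bigr => x _ do rewrite big_split /=.
rewrite big_split /= delta2.
under eq_bigr => x _ do under eq_bigr => y _ do rewrite [_ * (x == i)%:R]mulrC.
by rewrite delta2 -mulrDl.
Qed.

Lemma stab0_hess_sym l i j : conn_jet 0 G -> stab0_hess l j i = stab0_hess l i j.
Proof.
move=> G_sym; rewrite /stab0_hess.
have e1 : \sum_(a < n) (G a j i)@_0%MM * A l a = \sum_(a < n) (G a i j)@_0%MM * A l a.
  by apply: eq_bigr => a _; rewrite (G_sym a j i).1.
have e2 : \sum_(a < n) (G l a i)@_0%MM * A a j = \sum_(a < n) (G l i a)@_0%MM * A a j.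
  by apply: eq_bigr => a _; rewrite (G_sym l a i).1.
have e3 : \sum_(a < n) (G l j a)@_0%MM * A a i = \sum_(a < n) (G l a j)@_0%MM * A a i.
  by apply: eq_bigr => a _; rewrite (G_sym l j a).1.
by rewrite e1 e2 e3; ring.
Qed.

Lemma stab0_field_stab : conn_jet 0 G -> stab 0 G stab0_field.
Proof.
move=> G_sym; split=> [l|l i j m].
  split=> [|m m_gt2]; first by rewrite stab0_field_coef_deg ?mdeg0.
  by apply: stab0_field_coef_deg; lia.
rewrite leqn0 mdeg_eq0 => /eqP ->; rewrite -/(lie0 _ _ _ _ _) lie0E.
rewrite stab0_field_dd stab0_hess_sym // big1 => [|a _]; last first.
  by rewrite stab0_field_coef_deg ?mdeg0 ?mul0r.
under eq_bigr do rewrite stab0_field_coefU.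
under [X in _ + X + _ + _]eq_bigr do rewrite stab0_field_coefU.
under [X in _ + X + _]eq_bigr do rewrite stab0_field_coefU.
by rewrite /stab0_hess; field.
Qed.

End OrderZero.

Section GenericJets.
Variables (R : realType) (n k : nat).
Implicit Types (G H : chris R n).

Lemma stab_lin_inj G (V W : vfield R n) : stab k G V -> stab k G W ->
  (forall l s, (V l)@_U_(s) = (W l)@_U_(s)) -> forall l, V l = W l.
Proof.
move=> Vstab Wstab VW l; apply/eqP; rewrite -subr_eq0 -scaleN1r addrC; apply/eqP.
apply: (stab_eq0 (stab_comb (-1) Wstab Vstab)) => l' s.
by rewrite /vcomb mcoeffD mcoeffZ VW mulN1r addNr.
Qed.

Lemma conn_jet_line G H t : conn_jet k G -> conn_jet k H -> conn_jet k (jet_line G H t).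
Proof.
move=> G_jet H_jet l i j; have [Gs Gk] := G_jet l i j; have [Hs Hk] := H_jet l i j.
split=> [|m m_gt]; first by rewrite /jet_line Gs Hs.
by rewrite /jet_line mcoeffD mcoeffZ Gk // Hk // mulr0 addr0.
Qed.

Lemma cyc_conn_jet : (0 < k)%N -> conn_jet k (@cyc_conn R n).
Proof.
move=> k_gt0 l i j; split=> [|m m_gt].
  by rewrite /cyc_conn; case: (eqVneq i j) => [->|/negbTE ij]; rewrite ?ij ?scale0r.
rewrite /cyc_conn mcoeffZ mcoeffX; have [eU|_] := eqVneq U_(ordS i)%MM m.
  by move: m_gt; rewrite -eU mdeg1 ltnNge k_gt0.
by rewrite /= mulr0n mulr0.
Qed.

Definition generic_jet G := conn_jet k G /\ \det (phi_mx G) != 0.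

Lemma generic_jet_open : jet_open k generic_jet.
Proof.
move=> G [_ detG]; have detG_gt0 : 0 < `|\det (phi_mx G)| by rewrite normr_gt0.
have [d d_gt0 close] := jet_poly_continuous (@jet_poly_det_phi_mx R n) G detG_gt0.
exists d => // G' G'_jet /close near; split=> //.
by apply: contraTneq near => ->; rewrite sub0r normrN ltxx.
Qed.

Lemma generic_jet_dense : (2 < n)%N -> (0 < k)%N -> jet_dense k generic_jet.
Proof.
move=> n_gt2 k_gt0 G G_jet e e_gt0.
pose H := jet_line (@cyc_conn R n) G (-1).
have [P eP] := jet_poly_line G H (@jet_poly_det_phi_mx R n).
have P_neq0 : P != 0.
  apply: contraNneq (phi_mx_cyc_det R n_gt2) => P0.
  have -> : @cyc_conn R n = jet_line G H 1.
    do 3 apply: functional_extensionality => ?.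
    by rewrite /H /jet_line scale1r scaleN1r addrCA subrr addr0.
  by rewrite eP P0 horner0.
have N_ge0 := jet_norm_ge0 H.
have c_gt0 : 0 < e / (2 * (jet_norm H + 1)) by rewrite divr_gt0 //; lra.
have [t [t_gt0 t_le P_t]] := poly_nonroot_in P_neq0 c_gt0.
exists (jet_line G H t); split.
  split; last by rewrite eP.
  by apply: conn_jet_line => //; apply: conn_jet_line => //; exact: cyc_conn_jet.
move=> l i j m; rewrite /jet_line mcoeffD mcoeffZ addrC addKr normrM gtr0_norm //.
have coef_le := coef_le_jet_norm H l i j m.
have tN : t * `|(H l i j)@_m| <= t * jet_norm H by rewrite ler_wpM2l // ltW.
have te : t * (2 * (jet_norm H + 1)) <= e by rewrite -ler_pdivlMr //; lra.
lra.
Qed.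

Lemma generic_jet_stab G V : (0 < k)%N -> generic_jet G -> stab k G V -> forall l, V l = 0.
Proof.
move=> k_gt0 [_ detG] Vstab; apply: (stab_eq0 Vstab).
exact: stab_lin_eq0 k_gt0 detG Vstab.
Qed.

End GenericJets.

Unset Implicit Arguments.

Theorem mainTheorem4 (R : realType) (n : nat) (hn : (3 <= n)%N) :
  (* k = 0: V |-> V_1 is a bijection from the stabilizer onto linear fields
     (linear fields  <->  n x n matrices A, V_1^l = sum_i A l i x_i) *)
  (forall G : chris R n, conn_jet 0 G ->
     forall A : 'M[R]_n,
       exists V : vfield R n,
         (stab 0 G V /\ forall l i : 'I_n, (V l)@_U_(i) = A l i) /\
         (forall V' : vfield R n,
            stab 0 G V' -> (forall l i : 'I_n, (V' l)@_U_(i) = A l i) ->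
            forall l, V' l = V l)) /\
  (* k >= 1: trivial stabilizer on an open dense subset of F_k *)
  (forall k : nat, (1 <= k)%N ->
     exists S : chris R n -> Prop,
       (forall G, S G -> conn_jet k G) /\ jet_open k S /\ jet_dense k S /\
       forall G, S G -> forall V : vfield R n, stab k G V -> forall l, V l = 0).
Proof.
split=> [G G_sym A | k k_gt0].
  have V0stab := stab0_field_stab A G_sym.
  exists (stab0_field G A); split=> [|V' V'stab V'A]; first by split=> //; exact: stab0_field_coefU.
  by apply: stab_lin_inj V'stab V0stab _ => l s; rewrite V'A stab0_field_coefU.
exists (generic_jet k); split=> [G []//|]; split; first exact: generic_jet_open.
split; first exact: generic_jet_dense hn k_gt0.
by move=> G G_gen V; exact: generic_jet_stab k_gt0 G_gen.
Qed.
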